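(* Under the setting described in the context, \begin{align*} \Psi & = \sum_{k=0}^{\infty} P_{\lambda++}^k P_{\lambda+-} \left(I- \lambda^{-1} U\right)^{-k-1} \\ & = \sum_{n=0}^{\infty} \left(I- \mu^{-1}T_{++}\right)^{-n-1}P_{\mu+-}V_\mu^n \\ & = \sum_{m=0}^{\infty} Q^m\left(I-\mu^{-1}T_{++}\right)^{-1} \left(P_{\lambda+-}W + P_{\mu+-}\right)W^m, \end{align*} where \[ Q:= \left(I-\mu^{-1}T_{++}\right)^{-1}\left(I+\lambda^{-1}T_{++}\right), \quad W := \left(I + \mu^{-1}U\right)\left(I- \lambda^{-1}U\right)^{-1}, \] and $P_{\mu} := I + \mu^{-1}T$, analogously to $P_\lambda$.
   Context: Consider a fluid queue $\{X_t,\varphi_t\}$ whose phase $\varphi_t$ is a continuous-time Markov chain on a finite state space $\mathcal{S}=\mathcal{S}_+\cup\mathcal{S}_-$ with generator $T$, and whose level moves at unit rates: rate $+1$ in phases of $\mathcal{S}_+$ and rate $-1$ in phases of $\mathcal{S}_-$. Partition $T$ into blocks $T_{++},T_{+-},T_{-+},T_{--}$ according to $\mathcal{S}_+,\mathcal{S}_-$. Let $\Psi$ be the return probability matrix: $\Psi_{ij}$ is the probability that the fluid, starting in phase $i\in\mathcal{S}_+$ at some level, first returns to that level (from above) in phase $j\in\mathcal{S}_-$; equivalently $\Psi$ is the minimal nonnegative solution of $T_{+-} + \Psi T_{--} + T_{++}\Psi + \Psi T_{-+}\Psi = 0$. Let $U := T_{--} + T_{-+}\Psi$ be the generator of the phase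 of the downward record process. For uniformization rates $\lambda,\mu>0$ (large enough that the matrices below are stochastic), set $P_\lambda := I + \lambda^{-1}T$, $P_\mu := I+\mu^{-1}T$, $V_\mu := I + \mu^{-1}U$, with $P_{\lambda++}, P_{\lambda+-}, P_{\mu+-}$ the corresponding sub-blocks. *)

From HB Require Import structures.
From mathcomp Require Import all_boot all_order all_algebra.
From mathcomp Require Import all_classical all_reals.
From mathcomp Require Import topology normedtype sequences.
Set Implicit Arguments. Unset Strict Implicit. Unset Printing Implicit Defensive.
Import Order.TTheory GRing.Theory Num.Theory.
Import numFieldNormedType.Exports.
Local Open Scope classical_set_scope.
Local Open Scope ring_scope.

(* Phases: S = S_+ (first p indices) followed by S_- (last m indices). *)

Definition is_generator (R : realType) (n : nat) (T : 'M[R]_n) : Prop :=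
  (forall i j, i != j -> 0 <= T i j) /\ (forall i, \sum_j T i j = 0).

Definition stochastic (R : realType) (n : nat) (P : 'M[R]_n) : Prop :=
  (forall i j, 0 <= P i j) /\ (forall i, \sum_j P i j = 1).

Definition mx_nonneg (R : realType) (a b : nat) (X : 'M[R]_(a, b)) : Prop :=
  forall i j, 0 <= X i j.

Definition riccati (R : realType) (p m : nat) (T : 'M[R]_(p + m))
    (X : 'M[R]_(p, m)) : Prop :=
  ursubmx T + X *m drsubmx T + ulsubmx T *m X + X *m dlsubmx T *m X = 0.

Definition minimal_nonneg_solution (R : realType) (p m : nat)
    (T : 'M[R]_(p + m)) (Psi : 'M[R]_(p, m)) : Prop :=
  [/\ mx_nonneg Psi, riccati T Psi &
      forall X : 'M[R]_(p, m), mx_nonneg X -> riccati T X ->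
        forall i j, Psi i j <= X i j].

Definition mx_series_to (R : realType) (a b : nat) (A : nat -> 'M[R]_(a, b))
    (S : 'M[R]_(a, b)) : Prop :=
  forall i j, series (fun k => A k i j) @ \oo --> S i j.

From HB Require Import structures.
From mathcomp Require Import all_boot all_order all_algebra.
From mathcomp Require Import all_classical all_reals.
From mathcomp Require Import topology normedtype sequences.
From mathcomp Require Import ring lra.
Set Implicit Arguments. Unset Strict Implicit. Unset Printing Implicit Defensive.
Import Order.TTheory GRing.Theory Num.Theory.
Import numFieldNormedType.Exports.
Local Open Scope classical_set_scope.
Local Open Scope ring_scope.

(* Write Syl(X) = T+- + T++ X + X U, so that Syl(Psi) = 0 is the Riccati
   equation.  Each of the three series has the form sum_k L^k C N^k with
   L, C, N >= 0 and C + L X N = X + s M Syl(X) M' for a scalar s <> 0 and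
   invertible M, M'.  Hence Psi is a fixed point of X |-> C + L X N, the partial
   sums increase and stay below Psi, and their limit S is again a fixed point,
   i.e. Syl(S) = 0.  Then Ric(S) = -S T-+ (Psi - S) <= 0; since Psi is also the
   least nonnegative supersolution of the Riccati equation (it is the limit of
   the monotone iteration X |-> X + Ric(X)/(2c) started at 0), Psi <= S and
   S = Psi.  The inverses are nonnegative because I - aU and I - bT++ are
   nonsingular M-matrices; U has nonpositive row sums because Psi 1 <= 1. *)

Local Notation ones R n := (const_mx 1 : 'cV[R]_n).

Definition mx_le (R : realType) (a b : nat) (X Y : 'M[R]_(a, b)) :=
  forall i j, X i j <= Y i j.

Section MatrixConvergence.
Variable R : realType.
Implicit Types a b c : nat.

Definition mx_cvg_to a b (X : nat -> 'M[R]_(a, b)) (L : 'M[R]_(a, b)) :=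
  forall i j, (fun n => X n i j) @ \oo --> L i j.

Lemma mx_series_toE a b (A : nat -> 'M[R]_(a, b)) S :
  mx_series_to A S <-> mx_cvg_to (fun n => \sum_(k < n) A k) S.
Proof.
have partial_sumE i j : series (fun k => A k i j) = fun n => (\sum_(k < n) A k) i j.
  by apply: funext => n; rewrite summxE /series /= big_mkord.
by split=> cvgA i j; have := cvgA i j; rewrite partial_sumE.
Qed.

Lemma mx_cvg_to_cst a b (L : 'M[R]_(a, b)) : mx_cvg_to (fun=> L) L.
Proof. by move=> i j; exact: cvg_cst. Qed.

Lemma mx_cvg_toD a b (X Y : nat -> 'M[R]_(a, b)) L K :
  mx_cvg_to X L -> mx_cvg_to Y K -> mx_cvg_to (fun n => X n + Y n) (L + K).
Proof.
by move=> cvgX cvgY i j; rewrite mxE; under eq_cvg do rewrite mxE; exact: cvgD.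
Qed.

Lemma mx_cvg_toZ a b (k : R) (X : nat -> 'M[R]_(a, b)) L :
  mx_cvg_to X L -> mx_cvg_to (fun n => k *: X n) (k *: L).
Proof.
move=> cvgX i j; rewrite mxE; under eq_cvg do rewrite mxE.
exact: cvgM (cvg_cst k) (cvgX i j).
Qed.

Lemma mx_cvg_toM a b c (X : nat -> 'M[R]_(a, b)) (Y : nat -> 'M[R]_(b, c)) L K :
  mx_cvg_to X L -> mx_cvg_to Y K -> mx_cvg_to (fun n => X n *m Y n) (L *m K).
Proof.
move=> cvgX cvgY i j; rewrite mxE; under eq_cvg do rewrite mxE.
apply: cvg_big => [|k _]; first exact: add_continuous.
exact: cvgM.
Qed.

Lemma mx_cvg_to_unique a b (X : nat -> 'M[R]_(a, b)) L K :
  mx_cvg_to X L -> mx_cvg_to X K -> L = K.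
Proof.
move=> cvgL cvgK; apply/matrixP => i j.
by rewrite -(cvg_lim _ (cvgL i j)) // (cvg_lim _ (cvgK i j)).
Qed.

Lemma mx_cvg_toS a b (X : nat -> 'M[R]_(a, b)) L :
  mx_cvg_to X L -> mx_cvg_to (fun n => X n.+1) L.
Proof. by move=> cvgX i j; rewrite (cvg_shiftS (fun n => X n i j)). Qed.

Lemma mx_cvg_to_le a b (X : nat -> 'M[R]_(a, b)) L B :
  mx_cvg_to X L -> (forall n, mx_le (X n) B) -> mx_le L B.
Proof.
move=> cvgX XB i j; apply: (cvgr_to_le (cvgX i j)); near=> n; exact: XB.
Unshelve. all: by end_near. Qed.

Lemma mx_cvg_to_nondecreasing a b (X : nat -> 'M[R]_(a, b)) B :
  (forall n, mx_le (X n) (X n.+1)) -> (forall n, mx_le (X n) B) ->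
  exists L, [/\ mx_cvg_to X L, forall n, mx_le (X n) L & mx_le L B].
Proof.
move=> X_nd XB.
have cvgX i j : cvgn (fun n => X n i j).
  apply: nondecreasing_is_cvgn; first by apply/nondecreasing_seqP => n; exact: X_nd.
  by exists (B i j) => _ [n _ <-]; exact: XB.
pose L := \matrix_(i, j) limn (fun n => X n i j).
have cvgXL : mx_cvg_to X L by move=> i j; rewrite mxE; exact: cvgX.
exists L; split => //; last exact: mx_cvg_to_le XB.
move=> n i j; rewrite mxE; apply: nondecreasing_cvgn_le => //.
by apply/nondecreasing_seqP => k; exact: X_nd.
Qed.

End MatrixConvergence.

Section MatrixOrder.
Variable R : realType.
Implicit Types a b c : nat.

Lemma mx_le_refl a b (X : 'M[R]_(a, b)) : mx_le X X.
Proof. by move=> i j. Qed.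

Lemma mx_le_trans a b (X Y Z : 'M[R]_(a, b)) : mx_le X Y -> mx_le Y Z -> mx_le X Z.
Proof. by move=> XY YZ i j; exact: le_trans (XY i j) (YZ i j). Qed.

Lemma mx_le_anti a b (X Y : 'M[R]_(a, b)) : mx_le X Y -> mx_le Y X -> X = Y.
Proof. by move=> XY YX; apply/matrixP => i j; apply/eqP; rewrite eq_le XY YX. Qed.

Lemma mx_leD a b (X1 X2 Y1 Y2 : 'M[R]_(a, b)) :
  mx_le X1 Y1 -> mx_le X2 Y2 -> mx_le (X1 + X2) (Y1 + Y2).
Proof. by move=> le1 le2 i j; rewrite !mxE lerD. Qed.

Lemma mx_leZ a b (k : R) (X Y : 'M[R]_(a, b)) :
  0 <= k -> mx_le X Y -> mx_le (k *: X) (k *: Y).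
Proof. by move=> k_ge0 XY i j; rewrite !mxE ler_wpM2l. Qed.

Lemma mx_le_wpM2l a b c (A : 'M[R]_(a, b)) (X Y : 'M[R]_(b, c)) :
  mx_nonneg A -> mx_le X Y -> mx_le (A *m X) (A *m Y).
Proof. by move=> A_ge0 XY i j; rewrite !mxE; apply: ler_sum => k _; exact: ler_wpM2l. Qed.

Lemma mx_le_wpM2r a b c (A : 'M[R]_(b, c)) (X Y : 'M[R]_(a, b)) :
  mx_nonneg A -> mx_le X Y -> mx_le (X *m A) (Y *m A).
Proof. by move=> A_ge0 XY i j; rewrite !mxE; apply: ler_sum => k _; exact: ler_wpM2r. Qed.

Lemma mx_nonnegE a b (X : 'M[R]_(a, b)) : mx_nonneg X <-> mx_le 0 X.
Proof. by split=> X_ge0 i j; move: (X_ge0 i j); rewrite mxE. Qed.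

Lemma mx_nonneg0 a b : mx_nonneg (0 : 'M[R]_(a, b)).
Proof. by move=> i j; rewrite mxE. Qed.

Lemma mx_nonneg1 a : mx_nonneg (1%:M : 'M[R]_a).
Proof. by move=> i j; rewrite mxE ler0n. Qed.

Lemma mx_nonneg_ones a : mx_nonneg (ones R a).
Proof. by move=> i j; rewrite mxE ler01. Qed.

Lemma mx_nonnegD a b (A B : 'M[R]_(a, b)) :
  mx_nonneg A -> mx_nonneg B -> mx_nonneg (A + B).
Proof. by move=> A_ge0 B_ge0 i j; rewrite mxE addr_ge0. Qed.

Lemma mx_nonnegZ a b (k : R) (A : 'M[R]_(a, b)) :
  0 <= k -> mx_nonneg A -> mx_nonneg (k *: A).
Proof. by move=> k_ge0 A_ge0 i j; rewrite mxE mulr_ge0. Qed.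

Lemma mx_nonnegM a b c (A : 'M[R]_(a, b)) (B : 'M[R]_(b, c)) :
  mx_nonneg A -> mx_nonneg B -> mx_nonneg (A *m B).
Proof.
by move=> A_ge0 B_ge0 i j; rewrite mxE; apply: sumr_ge0 => k _; exact: mulr_ge0.
Qed.

Lemma mx_nonnegX a (A : 'M[R]_a) k : mx_nonneg A -> mx_nonneg (A ^+ k).
Proof.
move=> A_ge0; elim: k => [|k IHk]; first by rewrite expr0; exact: mx_nonneg1.
by rewrite exprS; exact: mx_nonnegM.
Qed.

Lemma mx_nonneg_add_scalar n (K : 'M[R]_n) (c : R) :
  (forall i j, i != j -> 0 <= K i j) -> (forall i, 0 <= c + K i i) ->
  mx_nonneg (K + c%:M).
Proof.
move=> K_offdiag K_diag i j; rewrite !mxE.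
have [<-|ne] := eqVneq i j; first by rewrite mulr1n addrC.
by rewrite mulr0n addr0 K_offdiag.
Qed.

Lemma exists_diag_shift n (A : 'M[R]_n) : exists2 c : R, 0 < c & forall i, 0 <= c + A i i.
Proof.
exists (1 + \sum_i `|A i i|); first by rewrite ltr_pwDl // sumr_ge0.
move=> i; rewrite (bigD1 i) //=.
have : - A i i <= `|A i i| by rewrite ler_normr lexx orbT.
have : 0 <= \sum_(j | j != i) `|A j j| by rewrite sumr_ge0.
lra.
Qed.

(* Minimum principle: at a row where the j-th column of x is smallest, the
   j-th entry of M x is at most (row sum of M) * (that entry). *)
Lemma Zmx_mul_nonneg n k (M : 'M[R]_n) (x : 'M[R]_(n, k)) :
  (forall i j, i != j -> M i j <= 0) -> (forall i, 0 < \sum_j M i j) ->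
  mx_nonneg (M *m x) -> mx_nonneg x.
Proof.
move=> M_offdiag M_rows Mx_ge0 i0 j; rewrite leNgt; apply/negP => x_lt0.
have [i _ x_min] := @arg_minP _ _ _ i0 xpredT (fun i => x i j) isT.
have xi_lt0 : x i j < 0 by apply: le_lt_trans (x_min i0 isT) x_lt0.
have := Mx_ge0 i j; rewrite mxE leNgt => /negP; apply.
apply: (@le_lt_trans _ _ (\sum_l M i l * x i j)).
  apply: ler_sum => l _; have [->//|ne] := eqVneq i l.
  by apply: ler_wnM2l; [exact: M_offdiag | exact: x_min].
by rewrite -mulr_suml pmulr_rlt0.
Qed.

Definition subgenerator n (K : 'M[R]_n) :=
  (forall i j, i != j -> 0 <= K i j) /\ mx_le (K *m ones R n) 0.

Section Resolvent.
Variables (n : nat) (K : 'M[R]_n) (a : R).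
Hypotheses (a_gt0 : 0 < a) (K_sub : subgenerator K).

Let M := 1%:M - a *: K.

Let M_offdiag i j : i != j -> M i j <= 0.
Proof.
move=> ne; rewrite !mxE (negbTE ne) mulr0n sub0r oppr_le0.
by apply: mulr_ge0; [exact: ltW | exact: K_sub.1].
Qed.

Let M_rows i : 0 < \sum_j M i j.
Proof.
have -> : \sum_j M i j = (M *m ones R n) i 0.
  by rewrite mxE; apply: eq_bigr => j _; rewrite [X in _ * X]mxE mulr1.
rewrite mulmxBl mul1mx -scalemxAl !mxE.
have := K_sub.2 i 0; rewrite !mxE => K1_le0.
by rewrite subr_gt0 (le_lt_trans _ ltr01) // mulr_ge0_le0 // ltW.
Qed.

Lemma resolvent_unit : M \in unitmx.
Proof.
rewrite unitmxE unitfE -det_tr; apply/det0P => -[v v_neq0 vM0].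
have Mv0 : M *m v^T = 0 by rewrite -[M]trmxK -trmx_mul vM0 trmx0.
have v_ge0 : mx_nonneg v^T.
  by apply: (Zmx_mul_nonneg M_offdiag M_rows); rewrite Mv0; exact: mx_nonneg0.
have v_le0 : mx_nonneg (- v^T).
  by apply: (Zmx_mul_nonneg M_offdiag M_rows); rewrite mulmxN Mv0 oppr0; exact: mx_nonneg0.
move/eqP: v_neq0; apply; apply/matrixP => i j; apply/eqP.
have := v_ge0 j i; have := v_le0 j i; rewrite !mxE oppr_ge0 => le0 ge0.
by rewrite eq_le le0 ge0.
Qed.

Lemma resolvent_nonneg : mx_nonneg (invmx M).
Proof.
apply: (Zmx_mul_nonneg M_offdiag M_rows).
by rewrite mulmxV ?resolvent_unit //; exact: mx_nonneg1.
Qed.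

End Resolvent.

Lemma sandwich_series_fixpoint a b (L : 'M[R]_a) (C P : 'M[R]_(a, b)) (N : 'M[R]_b) :
  mx_nonneg L -> mx_nonneg C -> mx_nonneg N -> mx_nonneg P ->
  P = C + L *m P *m N ->
  exists S, [/\ mx_series_to (fun k => L ^+ k *m C *m N ^+ k) S,
     mx_nonneg S, mx_le S P & S = C + L *m S *m N].
Proof.
move=> L_ge0 C_ge0 N_ge0 P_ge0 P_fix.
pose term k := L ^+ k *m C *m N ^+ k.
pose sum n := \sum_(k < n) term k.
have sandwich_ge0 k (X : 'M_(a, b)) :
    mx_nonneg X -> mx_nonneg (L ^+ k *m X *m N ^+ k).
  move=> X_ge0; apply: mx_nonnegM (mx_nonnegX k N_ge0).
  exact: mx_nonnegM (mx_nonnegX k L_ge0) X_ge0.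
have sumS n : sum n.+1 = C + L *m sum n *m N.
  rewrite /sum big_ord_recl /term expr0 mul1mx mulmx1 mulmx_sumr mulmx_suml.
  by congr (_ + _); apply: eq_bigr => k _; rewrite exprS exprSr -!mulmxE !mulmxA.
have P_split n : P = sum n + L ^+ n *m P *m N ^+ n.
  elim: n => [|n IHn]; first by rewrite /sum big_ord0 add0r expr0 mul1mx mulmx1.
  rewrite {1}P_fix {1}IHn mulmxDr mulmxDl addrA -sumS.
  by rewrite exprS exprSr -!mulmxE !mulmxA.
have sum_le n : mx_le (sum n) P.
  by move=> i j; rewrite (P_split n) mxE lerDl sandwich_ge0.
have sum_nd n : mx_le (sum n) (sum n.+1).
  by move=> i j; rewrite /sum big_ord_recr mxE lerDl sandwich_ge0.
have [S [cvgS sum_leS S_le]] := mx_cvg_to_nondecreasing sum_nd sum_le.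
exists S; split => //.
- exact/mx_series_toE.
- by apply/mx_nonnegE; apply: mx_le_trans (sum_leS 0%N); rewrite /sum big_ord0.
- apply: (mx_cvg_to_unique (mx_cvg_toS cvgS)).
  under [fun n => _]funext do rewrite sumS.
  apply: mx_cvg_toD; first exact: mx_cvg_to_cst.
  by apply: mx_cvg_toM; first apply: mx_cvg_toM; rewrite //; exact: mx_cvg_to_cst.
Qed.

End MatrixOrder.

Arguments mx_nonneg0 {R a b}.
Arguments mx_nonneg1 {R a}.
Arguments mx_nonneg_ones {R a}.

Section GeneratorBlocks.
Variables (R : realType) (p m : nat) (T : 'M[R]_(p + m)).
Hypothesis T_gen : is_generator T.

Lemma generator_ur_nonneg : mx_nonneg (ursubmx T).
Proof. by move=> i j; rewrite !mxE; apply: T_gen.1; rewrite eq_lrshift. Qed.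

Lemma generator_dl_nonneg : mx_nonneg (dlsubmx T).
Proof. by move=> i j; rewrite !mxE; apply: T_gen.1; rewrite eq_rlshift. Qed.

Lemma generator_ul_offdiag i j : i != j -> 0 <= ulsubmx T i j.
Proof. by move=> ne; rewrite !mxE; apply: T_gen.1; rewrite (inj_eq (@lshift_inj _ _)). Qed.

Lemma generator_dr_offdiag i j : i != j -> 0 <= drsubmx T i j.
Proof. by move=> ne; rewrite !mxE; apply: T_gen.1; rewrite (inj_eq (@rshift_inj _ _)). Qed.

Lemma generator_block_rows :
  ulsubmx T *m ones R p + ursubmx T *m ones R m = 0 /\
  dlsubmx T *m ones R p + drsubmx T *m ones R m = 0.
Proof.
have T1 : T *m ones R (p + m) = 0.
  apply/matrixP => i j; rewrite !mxE -[RHS](T_gen.2 i).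
  by apply: eq_bigr => k _; rewrite mxE mulr1.
move: T1; rewrite -{1}(submxK T) -col_mx_const mul_block_col -(col_mx0 _ p m 1).
by move/eq_col_mx.
Qed.

Lemma generator_ul_subgenerator : subgenerator (ulsubmx T).
Proof.
split; first exact: generator_ul_offdiag.
have -> : ulsubmx T *m ones R p = - (ursubmx T *m ones R m).
  by apply/eqP; rewrite -addr_eq0 (generator_block_rows).1.
move=> i j; have := mx_nonnegM generator_ur_nonneg mx_nonneg_ones i j.
by rewrite !mxE oppr_le0.
Qed.

End GeneratorBlocks.

Definition riccati_res (R : realType) (p m : nat) (T : 'M[R]_(p + m)) (X : 'M[R]_(p, m)) :=
  ursubmx T + X *m drsubmx T + ulsubmx T *m X + X *m dlsubmx T *m X.

Section RiccatiIteration.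
Variables (R : realType) (p m : nat) (T : 'M[R]_(p + m)) (c : R).
Hypotheses (T_gen : is_generator T) (c_gt0 : 0 < c)
  (c_diag : forall i, 0 <= c + T i i).

Local Notation Tpc := (ulsubmx T + c%:M).
Local Notation Tmc := (drsubmx T + c%:M).

Definition riccati_step X := X + (c *+ 2)^-1 *: riccati_res T X.

(* The step size 1/(2c) turns the diagonal blocks into [T++ + c] and [T-- + c],
   so that the step is a nonnegative, monotone map. *)
Lemma riccati_stepE X : riccati_step X =
  (c *+ 2)^-1 *: (Tpc *m X + X *m Tmc + ursubmx T + X *m dlsubmx T *m X).
Proof.
rewrite /riccati_step /riccati_res mulmxDl mulmxDr mul_scalar_mx mul_mx_scalar.
move: (ulsubmx T *m X) (X *m drsubmx T) (X *m dlsubmx T *m X) (ursubmx T).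
move=> TpX XTm XTX Tc; apply/matrixP => i j; rewrite !mxE.
by field; exact: lt0r_neq0.
Qed.

Let step_size_ge0 : 0 <= (c *+ 2)^-1.
Proof. by rewrite invr_ge0 mulrn_wge0 // ltW. Qed.

Let Tpc_nonneg : mx_nonneg Tpc.
Proof.
apply: mx_nonneg_add_scalar; first exact: generator_ul_offdiag.
by move=> i; rewrite !mxE c_diag.
Qed.

Let Tmc_nonneg : mx_nonneg Tmc.
Proof.
apply: mx_nonneg_add_scalar; first exact: generator_dr_offdiag.
by move=> i; rewrite !mxE c_diag.
Qed.

Lemma riccati_step_nonneg X : mx_nonneg X -> mx_nonneg (riccati_step X).
Proof.
move=> X_ge0; rewrite riccati_stepE; apply: mx_nonnegZ; first exact: step_size_ge0.
have XTX_ge0 := mx_nonnegM (mx_nonnegM X_ge0 (generator_dl_nonneg T_gen)) X_ge0.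
apply: mx_nonnegD XTX_ge0; apply: mx_nonnegD (generator_ur_nonneg T_gen).
exact: mx_nonnegD (mx_nonnegM Tpc_nonneg X_ge0) (mx_nonnegM X_ge0 Tmc_nonneg).
Qed.

Lemma riccati_step_le X Y : mx_nonneg X -> mx_le X Y ->
  mx_le (riccati_step X) (riccati_step Y).
Proof.
move=> X_ge0 XY; have Y_ge0 : mx_nonneg Y.
  by apply/mx_nonnegE; apply: mx_le_trans XY; apply/mx_nonnegE.
have Tmp_ge0 := generator_dl_nonneg T_gen.
rewrite !riccati_stepE; apply: mx_leZ; first exact: step_size_ge0.
apply: mx_leD; last first.
  apply: (@mx_le_trans _ _ _ _ (Y *m dlsubmx T *m X)).
    exact: mx_le_wpM2r X_ge0 (mx_le_wpM2r Tmp_ge0 XY).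
  exact: mx_le_wpM2l (mx_nonnegM Y_ge0 Tmp_ge0) XY.
apply: mx_leD (mx_le_refl _); apply: mx_leD.
  exact: mx_le_wpM2l Tpc_nonneg XY.
exact: mx_le_wpM2r Tmc_nonneg XY.
Qed.

Lemma riccati_step_super S :
  mx_le (riccati_res T S) 0 -> mx_le (riccati_step S) S.
Proof.
move=> res_le0 i j; have := res_le0 i j; rewrite !mxE gerDl => resS_le0.
exact: mulr_ge0_le0 step_size_ge0 resS_le0.
Qed.

Lemma riccati_step_rows X : mx_nonneg X ->
  mx_le (X *m ones R m) (ones R p) -> mx_le (riccati_step X *m ones R m) (ones R p).
Proof.
move=> X_ge0 X1_le1.
have [Tp1 Tm1] := generator_block_rows T_gen.
have step1_le : mx_le (riccati_step X *m ones R m) ((c *+ 2)^-1 *: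
    (Tpc *m ones R p + X *m (Tmc *m ones R m) + ursubmx T *m ones R m
     + X *m (dlsubmx T *m ones R p))).
  rewrite riccati_stepE; move: Tpc_nonneg (generator_dl_nonneg T_gen).
  move: (Tpc) (Tmc) (dlsubmx T) => A B D A_ge0 D_ge0.
  rewrite -scalemxAl !mulmxDl -!mulmxA; apply: mx_leZ; first exact: step_size_ge0.
  apply: mx_leD; last exact: mx_le_wpM2l X_ge0 (mx_le_wpM2l D_ge0 X1_le1).
  apply: mx_leD (mx_le_refl _); apply: mx_leD (mx_le_refl _).
  exact: mx_le_wpM2l A_ge0 X1_le1.
have rows_shift : Tpc *m ones R p + X *m (Tmc *m ones R m) + ursubmx T *m ones R m
    + X *m (dlsubmx T *m ones R p) = c *: (ones R p + X *m ones R m).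
  have Tc1 : ursubmx T *m ones R m = - (ulsubmx T *m ones R p).
    by apply/eqP; rewrite -addr_eq0 addrC Tp1.
  have Tmp1 : dlsubmx T *m ones R p = - (drsubmx T *m ones R m).
    by apply/eqP; rewrite -addr_eq0 Tm1.
  rewrite !mulmxDl !mul_scalar_mx Tc1 Tmp1 !mulmxDr mulmxN -scalemxAr.
  move: (ulsubmx T *m _) (X *m (drsubmx T *m _)) (X *m ones R m) => *.
  by apply/matrixP => i j; rewrite !mxE; ring.
move=> i j; apply: le_trans (step1_le i j) _; rewrite rows_shift.
have := X1_le1 i j; rewrite !mxE mulrA => row_le1.
have -> : (c *+ 2)^-1 * c = 2^-1 by field; exact: lt0r_neq0.
lra.
Qed.

Lemma riccati_iteration_least_solution : exists X, [/\ mx_nonneg X, riccati T X,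
  mx_le (X *m ones R m) (ones R p) &
  forall S, mx_nonneg S -> mx_le (riccati_res T S) 0 -> mx_le X S].
Proof.
pose X n := iter n riccati_step 0.
have X_props n : [/\ mx_nonneg (X n), mx_le (X n) (X n.+1) &
    mx_le (X n *m ones R m) (ones R p)].
  elim: n => [|n [X_ge0 X_le X1_le]].
    split; [exact: mx_nonneg0 | apply/mx_nonnegE | by move=> i j; rewrite mul0mx !mxE].
    exact: riccati_step_nonneg mx_nonneg0.
  by split; [exact: riccati_step_nonneg | exact: riccati_step_le | exact: riccati_step_rows].
have X_le1 n : mx_le (X n) (const_mx 1).
  have [X_ge0 _ X1_le] := X_props n; move=> i j.
  have := X1_le i 0; rewrite !mxE; under eq_bigr do rewrite mxE mulr1.
  by rewrite (bigD1 j) //=; apply: le_trans; rewrite lerDl sumr_ge0.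
have X_nd n : mx_le (X n) (X n.+1) by case: (X_props n).
have [L [cvgL XL _]] := mx_cvg_to_nondecreasing X_nd X_le1.
have cvg_step : mx_cvg_to (fun n => riccati_step (X n)) (riccati_step L).
  apply: mx_cvg_toD => //; apply: mx_cvg_toZ.
  apply: mx_cvg_toD; last by do 2![apply: mx_cvg_toM => //]; exact: mx_cvg_to_cst.
  apply: mx_cvg_toD; last by apply: mx_cvg_toM => //; exact: mx_cvg_to_cst.
  apply: mx_cvg_toD; first exact: mx_cvg_to_cst.
  by apply: mx_cvg_toM => //; exact: mx_cvg_to_cst.
have L_fix : riccati_step L = L := mx_cvg_to_unique cvg_step (mx_cvg_toS cvgL).
exists L; split.
- by apply/mx_nonnegE; exact: XL 0%N.
- move: L_fix; rewrite /riccati_step -[in RHS](addr0 L) => /addrI /eqP.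
  by rewrite scalemx_eq0 invr_eq0 mulrn_eq0 (gt_eqF c_gt0) => /eqP.
- apply: (mx_cvg_to_le (mx_cvg_toM cvgL (mx_cvg_to_cst (L := ones R m)))) => n.
  by case: (X_props n).
- move=> S S_ge0 resS_le0; apply: (mx_cvg_to_le cvgL).
  elim=> [|n IHn]; first exact/mx_nonnegE.
  apply: mx_le_trans (riccati_step_super resS_le0).
  by apply: riccati_step_le IHn; case: (X_props n).
Qed.

End RiccatiIteration.

Lemma riccati_least_solution (R : realType) (p m : nat) (T : 'M[R]_(p + m)) :
  is_generator T -> exists X, [/\ mx_nonneg X, riccati T X,
    mx_le (X *m ones R m) (ones R p) &
    forall S, mx_nonneg S -> mx_le (riccati_res T S) 0 -> mx_le X S].
Proof.
move=> T_gen; have [c c_gt0 c_diag] := exists_diag_shift T.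
exact: riccati_iteration_least_solution T_gen c_gt0 c_diag.
Qed.

Lemma minimal_nonneg_solution_least (R : realType) (p m : nat)
    (T : 'M[R]_(p + m)) (Psi : 'M[R]_(p, m)) :
  is_generator T -> minimal_nonneg_solution T Psi ->
  mx_le (Psi *m ones R m) (ones R p) /\
  forall S, mx_nonneg S -> mx_le (riccati_res T S) 0 -> mx_le Psi S.
Proof.
move=> T_gen [_ _ Psi_min].
have [X [X_ge0 X_ric X1_le1 X_least]] := riccati_least_solution T_gen.
have Psi_le_X : mx_le Psi X := Psi_min X X_ge0 X_ric.
split=> [|S S_ge0 resS_le0]; last exact: mx_le_trans Psi_le_X (X_least S S_ge0 resS_le0).
exact: mx_le_trans (mx_le_wpM2r mx_nonneg_ones Psi_le_X) X1_le1.
Qed.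

Lemma uniformized_blocks (R : realType) (p m : nat) (T : 'M[R]_(p + m)) (s : R) :
  [/\ ulsubmx (1%:M + s *: T) = 1%:M + s *: ulsubmx T,
      ursubmx (1%:M + s *: T) = s *: ursubmx T &
      drsubmx (1%:M + s *: T) = 1%:M + s *: drsubmx T].
Proof.
rewrite -{1 3 5}(submxK T) (scalar_mx_block p m 1) scale_block_mx add_block_mx.
by rewrite block_mxKul block_mxKur block_mxKdr add0r.
Qed.

Lemma mx_nonneg_blocks (R : realType) (p m : nat) (P : 'M[R]_(p + m)) :
  mx_nonneg P ->
  [/\ mx_nonneg (ulsubmx P), mx_nonneg (ursubmx P) & mx_nonneg (drsubmx P)].
Proof. by move=> P_ge0; split=> i j; rewrite !mxE. Qed.

Section SylvesterIdentities.
Variables (R : realType) (p m : nat).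
Variables (Tc : 'M[R]_(p, m)) (Tpp : 'M[R]_p) (U : 'M[R]_m).

Definition sylvester X := Tc + Tpp *m X + X *m U.

Ltac expand_mx :=
  rewrite ?(mulmxDl, mulmxDr, mulmxN, mulNmx, mul1mx, mulmx1);
  do ![rewrite -scalemxAl | rewrite -scalemxAr]; rewrite ?mulmxA.

Lemma sylvester_splitr X a :
  a *: Tc + (1%:M + a *: Tpp) *m X = X *m (1%:M - a *: U) + a *: sylvester X.
Proof.
rewrite /sylvester; expand_mx; move: (Tpp *m X) (X *m U) => *.
by apply/matrixP => i j; rewrite !mxE; ring.
Qed.

Lemma sylvester_splitl X b :
  b *: Tc + X *m (1%:M + b *: U) = (1%:M - b *: Tpp) *m X + b *: sylvester X.
Proof.
rewrite /sylvester; expand_mx; move: (Tpp *m X) (X *m U) => *.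
by apply/matrixP => i j; rewrite !mxE; ring.
Qed.

Lemma sylvester_split2 X a b :
  a *: Tc *m (1%:M + b *: U) + b *: Tc *m (1%:M - a *: U)
    + (1%:M + a *: Tpp) *m X *m (1%:M + b *: U)
  = (1%:M - b *: Tpp) *m X *m (1%:M - a *: U) + (a + b) *: sylvester X.
Proof.
rewrite /sylvester; expand_mx.
move: (Tpp *m X *m U) (Tpp *m X) (Tc *m U) (X *m U) => *.
by apply/matrixP => i j; rewrite !mxE; ring.
Qed.

End SylvesterIdentities.

Section ReturnProbabilitySeries.
Variables (R : realType) (p m : nat) (T : 'M[R]_(p + m)) (Psi : 'M[R]_(p, m))
  (lambda mu : R).
Hypotheses (T_gen : is_generator T) (Psi_min : minimal_nonneg_solution T Psi)
  (lambda_gt0 : 0 < lambda) (mu_gt0 : 0 < mu)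
  (Pl_stoch : stochastic (1%:M + lambda^-1 *: T))
  (Pm_stoch : stochastic (1%:M + mu^-1 *: T)).

Local Notation Tpp := (ulsubmx T).
Local Notation Tc := (ursubmx T).
Local Notation Tmm := (drsubmx T).
Local Notation Tmp := (dlsubmx T).
Local Notation U := (Tmm + Tmp *m Psi).
Local Notation Syl := (sylvester Tc Tpp U).
Local Notation Plpp := (ulsubmx (1%:M + lambda^-1 *: T)).
Local Notation Plpm := (ursubmx (1%:M + lambda^-1 *: T)).
Local Notation Pmpm := (ursubmx (1%:M + mu^-1 *: T)).
Local Notation Vmu := (1%:M + mu^-1 *: U).
Local Notation Ainv := (invmx (1%:M - lambda^-1 *: U)).
Local Notation Binv := (invmx (1%:M - mu^-1 *: Tpp)).
Local Notation Q := (Binv *m (1%:M + lambda^-1 *: Tpp)).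
Local Notation W := (Vmu *m Ainv).

Let Psi_ge0 : mx_nonneg Psi.
Proof. by case: Psi_min. Qed.

Lemma sylvester_Psi : Syl Psi = 0.
Proof.
case: Psi_min => _ Psi_ric _; rewrite -[RHS]Psi_ric /sylvester mulmxDr mulmxA.
move: (Psi *m Tmm) (Psi *m Tmp *m Psi) (Tpp *m Psi) Tc => *.
by apply/matrixP => i j; rewrite !mxE; ring.
Qed.

(* [Ric(S) = Syl(S) - S T-+ (Psi - S)], so a nonnegative solution [S <= Psi] of
   the Sylvester equation is a supersolution of the Riccati equation. *)
Lemma sylvester_eq0_Psi S : mx_nonneg S -> mx_le S Psi -> Syl S = 0 -> S = Psi.
Proof.
move=> S_ge0 S_le SylS0; apply: mx_le_anti (S_le) _.
have [_ Psi_least] := minimal_nonneg_solution_least T_gen Psi_min.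
apply: Psi_least => // i j.
have -> : riccati_res T S = Syl S - S *m Tmp *m (Psi - S).
  rewrite /riccati_res /sylvester mulmxDr mulmxBr !mulmxA.
  move: (S *m Tmm) (S *m Tmp *m Psi) (S *m Tmp *m S) (Tpp *m S) Tc => *.
  by apply/matrixP => k l; rewrite !mxE; ring.
have : mx_nonneg (S *m Tmp *m (Psi - S)).
  apply: mx_nonnegM (mx_nonnegM S_ge0 (generator_dl_nonneg T_gen)) _.
  by move=> k l; rewrite !mxE subr_ge0; exact: S_le.
by rewrite SylS0 sub0r => /(_ i j); rewrite !mxE oppr_le0.
Qed.

Lemma U_subgenerator : subgenerator U.
Proof.
have [Psi_rows _] := minimal_nonneg_solution_least T_gen Psi_min.
have [_ Tm1] := generator_block_rows T_gen.
split=> [i j ne|].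
  rewrite mxE; apply: addr_ge0; first exact: generator_dr_offdiag.
  exact: mx_nonnegM (generator_dl_nonneg T_gen) Psi_ge0 i j.
rewrite mulmxDl -mulmxA addrC -Tm1.
exact: mx_leD (mx_le_wpM2l (generator_dl_nonneg T_gen) Psi_rows) (mx_le_refl _).
Qed.

Let Vmu_ge0 : mx_nonneg Vmu.
Proof.
have [_ _ Pm_dr] := uniformized_blocks T mu^-1.
have [_ _ Pm_dr_ge0] := mx_nonneg_blocks Pm_stoch.1.
rewrite Pm_dr in Pm_dr_ge0; rewrite scalerDr addrA.
apply: mx_nonnegD Pm_dr_ge0 (mx_nonnegZ _ (mx_nonnegM _ Psi_ge0)).
  by rewrite invr_ge0 ltW.
exact: generator_dl_nonneg.
Qed.

Let lambdaV_gt0 : 0 < lambda^-1. Proof. by rewrite invr_gt0. Qed.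
Let muV_gt0 : 0 < mu^-1. Proof. by rewrite invr_gt0. Qed.
Let A_unit := resolvent_unit lambdaV_gt0 U_subgenerator.
Let Ainv_ge0 := resolvent_nonneg lambdaV_gt0 U_subgenerator.
Let B_unit := resolvent_unit muV_gt0 (generator_ul_subgenerator T_gen).
Let Binv_ge0 := resolvent_nonneg muV_gt0 (generator_ul_subgenerator T_gen).
Let Ainv_unit : Ainv \in unitmx. Proof. by rewrite unitmx_inv. Qed.
Let Binv_unit : Binv \in unitmx. Proof. by rewrite unitmx_inv. Qed.

Lemma sandwich_series_Psi (L : 'M[R]_p) (C : 'M[R]_(p, m)) (N : 'M[R]_m)
    (s : R) (M : 'M[R]_p) (M' : 'M[R]_m) :
  mx_nonneg L -> mx_nonneg C -> mx_nonneg N ->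
  s != 0 -> M \in unitmx -> M' \in unitmx ->
  (forall X, C + L *m X *m N = X + s *: (M *m Syl X *m M')) ->
  mx_series_to (fun k => L ^+ k *m C *m N ^+ k) Psi.
Proof.
move=> L_ge0 C_ge0 N_ge0 s_neq0 M_unit M'_unit fixE.
have Psi_fix : Psi = C + L *m Psi *m N.
  by rewrite fixE sylvester_Psi mulmx0 mul0mx scaler0 addr0.
have [S [cvgS S_ge0 S_le S_fix]] :=
  sandwich_series_fixpoint L_ge0 C_ge0 N_ge0 Psi_ge0 Psi_fix.
suff <- : S = Psi by [].
apply: sylvester_eq0_Psi => //.
move: S_fix; rewrite fixE -{1}[S]addr0 => /addrI /esym /eqP.
rewrite scalemx_eq0 (negbTE s_neq0) /= => /eqP MSylM'0.
have -> : Syl S = invmx M *m (M *m Syl S *m M') *m invmx M'.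
  by rewrite !mulmxA mulVmx // mul1mx -mulmxA mulmxV // mulmx1.
by rewrite MSylM'0 mulmx0 mul0mx.
Qed.

Lemma Psi_series_lambda :
  mx_series_to (fun k => Plpp ^+ k *m Plpm *m Ainv ^+ k.+1) Psi.
Proof.
have [Pl_ul Pl_ur _] := uniformized_blocks T lambda^-1.
have [Pl_ul_ge0 Pl_ur_ge0 _] := mx_nonneg_blocks Pl_stoch.1.
have := sandwich_series_Psi Pl_ul_ge0 (mx_nonnegM Pl_ur_ge0 Ainv_ge0) Ainv_ge0
  (lt0r_neq0 lambdaV_gt0) (unitmx1 _ _) Ainv_unit.
have -> : (fun k => Plpp ^+ k *m (Plpm *m Ainv) *m Ainv ^+ k)
    = (fun k => Plpp ^+ k *m Plpm *m Ainv ^+ k.+1).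
  by apply: funext => k; rewrite exprS -mulmxE !mulmxA.
apply=> X; rewrite mul1mx -mulmxDl Pl_ul Pl_ur (sylvester_splitr Tc Tpp U).
by rewrite mulmxDl -mulmxA mulmxV // mulmx1 scalemxAl.
Qed.

Lemma Psi_series_mu :
  mx_series_to (fun n => Binv ^+ n.+1 *m Pmpm *m Vmu ^+ n) Psi.
Proof.
have [_ Pm_ur _] := uniformized_blocks T mu^-1.
have [_ Pm_ur_ge0 _] := mx_nonneg_blocks Pm_stoch.1.
have := sandwich_series_Psi Binv_ge0 (mx_nonnegM Binv_ge0 Pm_ur_ge0) Vmu_ge0
  (lt0r_neq0 muV_gt0) Binv_unit (unitmx1 _ _).
have -> : (fun k => Binv ^+ k *m (Binv *m Pmpm) *m Vmu ^+ k)
    = (fun k => Binv ^+ k.+1 *m Pmpm *m Vmu ^+ k).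
  by apply: funext => k; rewrite exprSr -mulmxE !mulmxA.
apply=> X; rewrite mulmx1 -mulmxA -mulmxDr Pm_ur (sylvester_splitl Tc Tpp U).
by rewrite mulmxDr mulmxA mulVmx // mul1mx scalemxAr.
Qed.

Lemma Psi_series_lambda_mu :
  mx_series_to (fun j => Q ^+ j *m Binv *m (Plpm *m W + Pmpm) *m W ^+ j) Psi.
Proof.
have [Pl_ul Pl_ur _] := uniformized_blocks T lambda^-1.
have [_ Pm_ur _] := uniformized_blocks T mu^-1.
have [Pl_ul_ge0 Pl_ur_ge0 _] := mx_nonneg_blocks Pl_stoch.1.
have [_ Pm_ur_ge0 _] := mx_nonneg_blocks Pm_stoch.1.
have W_ge0 : mx_nonneg W := mx_nonnegM Vmu_ge0 Ainv_ge0.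
have Q_ge0 : mx_nonneg Q by apply: mx_nonnegM Binv_ge0 _; rewrite -Pl_ul.
have C_ge0 : mx_nonneg (Binv *m (Plpm *m W + Pmpm)).
  exact: mx_nonnegM Binv_ge0 (mx_nonnegD (mx_nonnegM Pl_ur_ge0 W_ge0) Pm_ur_ge0).
have sum_neq0 : lambda^-1 + mu^-1 != 0 by rewrite lt0r_neq0 // addr_gt0.
have := sandwich_series_Psi Q_ge0 C_ge0 W_ge0 sum_neq0 Binv_unit Ainv_unit.
have -> : (fun j => Q ^+ j *m (Binv *m (Plpm *m W + Pmpm)) *m W ^+ j)
    = (fun j => Q ^+ j *m Binv *m (Plpm *m W + Pmpm) *m W ^+ j).
  by apply: funext => j; rewrite !mulmxA.
apply=> X.
have -> : Binv *m (Plpm *m W + Pmpm) + Q *m X *m W = Binv *m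
    (Plpm *m Vmu + Pmpm *m (1%:M - lambda^-1 *: U) + Plpp *m X *m Vmu) *m Ainv.
  rewrite Pl_ul; move: (Plpm) (Pmpm) (Vmu) (1%:M + _ *: Tpp) => Pl Pm V Pp.
  rewrite -[RHS]mulmxA !mulmxDl mulmxDr -(mulmxA Pm) mulmxV // mulmx1 !mulmxA.
  by rewrite mulmxDr !mulmxA.
rewrite Pl_ul Pl_ur Pm_ur (sylvester_split2 Tc Tpp U) (mulmxDr Binv) (mulmxDl _ _ Ainv).
by rewrite !mulmxA mulVmx // mul1mx -mulmxA mulmxV // mulmx1 -scalemxAr -scalemxAl.
Qed.

End ReturnProbabilitySeries.

Unset Implicit Arguments.

Theorem theorem2 (R : realType) (p m : nat) (T : 'M[R]_(p + m))
  (Psi : 'M[R]_(p, m)) (lambda mu : R) :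
  is_generator T ->
  minimal_nonneg_solution T Psi ->
  0 < lambda -> 0 < mu ->
  stochastic (1%:M + lambda^-1 *: T) ->
  stochastic (1%:M + mu^-1 *: T) ->
  let Tpp := ulsubmx T in
  let Tmm := drsubmx T in
  let Tmp := dlsubmx T in
  let U := Tmm + Tmp *m Psi in
  let Plpp := ulsubmx (1%:M + lambda^-1 *: T) in
  let Plpm := ursubmx (1%:M + lambda^-1 *: T) in
  let Pmpm := ursubmx (1%:M + mu^-1 *: T) in
  let Vmu := 1%:M + mu^-1 *: U in
  let Ainv := invmx (1%:M - lambda^-1 *: U) in
  let Binv := invmx (1%:M - mu^-1 *: Tpp) in
  let Q := Binv *m (1%:M + lambda^-1 *: Tpp) in
  let W := (1%:M + mu^-1 *: U) *m Ainv in
  [/\ mx_series_to (fun k => Plpp ^+ k *m Plpm *m Ainv ^+ k.+1) Psi,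
      mx_series_to (fun n => Binv ^+ n.+1 *m Pmpm *m Vmu ^+ n) Psi &
      mx_series_to (fun j => Q ^+ j *m Binv *m (Plpm *m W + Pmpm) *m W ^+ j) Psi].
Proof.
move=> T_gen Psi_min lambda_gt0 mu_gt0 Pl_stoch Pm_stoch /=.
split; [exact: Psi_series_lambda | exact: Psi_series_mu | exact: Psi_series_lambda_mu].
Qed.
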